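(* For every $A\in\mathsf{TNNIL}$: (1) $\mathsf{LLe}^+\vdash\boxdot A^l\leftrightarrow\boxdot A^\Box$; (2) $\mathsf{LLe}^+\vdash A^\Box\to A$; (3) if $A\in\mathsf{NOI}$ then $\mathsf{LLe}^+\vdash A^\Box\leftrightarrow A$; (4) $\mathsf{LLe}^+\vdash\Box A\leftrightarrow\Box A^\Box$.
   Context: Modal language: propositional variables, $\bot$, $\wedge,\vee,\to$, $\Box$; atomic = variables and $\bot$; $\boxdot A:=A\wedge\Box A$. $\mathsf{iGL}$: intuitionistic propositional logic in the modal language plus $\Box(A\to B)\to(\Box A\to\Box B)$, $\Box A\to\Box\Box A$, $\Box(\Box A\to A)\to\Box A$, closed under modus ponens and necessitation. $\mathsf{NOI}$: propositions in which every $\to$ is in the scope of a $\Box$. Leivant's translation: $A^l=A$ for atomic/boxed $A$; $(A\wedge B)^l=A^l\wedge B^l$; $(A\vee B)^l=\boxdot A^l\vee\boxdot B^l$; $(A\to B)^l=A\to B^l$ if $A\in\mathsf{NOI}$, else $A\to B$. $\mathsf{LLe}^+:=\mathsf{iGL}+\{\Box A\to\Box A^l\}+\{p\to\Box p: p\text{ atomic}\}$. $\mathsf{TNNIL}$: smallest class containing atomic propositions, closed under $\wedge,\vee,\Box$, and containing $A\to B$ whenever $A,B\in\mathsf{TNNIL}$ and $A\in\mathsf{NOI}$. Box-translation: $A^\Box:=A\wedge\Box A$ for atomic $A$; $(A\circ B)^\Box:=A^\Box\circ B^\Box$ for $\circ\in\{\wedge,\vee\}$; $(A\to B)^\Box:=(A^\Box\to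 B^\Box)\wedge\Box(A^\Box\to B^\Box)$; $(\Box A)^\Box:=\Box(A^\Box)$. *)

From Stdlib Require Import Bool.

Inductive form : Type :=
| Var : nat -> form
| Bot : form
| And : form -> form -> form
| Or  : form -> form -> form
| Imp : form -> form -> form
| Box : form -> form.

Definition Iff (A B : form) : form := And (Imp A B) (Imp B A).
Definition boxdot (A : form) : form := And A (Box A).

Definition atomic (A : form) : Prop :=
  match A with Var _ | Bot => True | _ => False end.

Fixpoint noi (A : form) : bool :=
  match A with
  | Var _ | Bot => true
  | And B C | Or B C => noi B && noi C
  | Imp _ _ => false
  | Box _ => true
  end.

Fixpoint lei (A : form) : form :=
  match A with
  | Var _ | Bot | Box _ => A
  | And B C => And (lei B) (lei C)
  | Or B C => Or (boxdot (lei B)) (boxdot (lei C))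
  | Imp B C => if noi B then Imp B (lei C) else Imp B C
  end.

Fixpoint boxt (A : form) : form :=
  match A with
  | Var _ | Bot => And A (Box A)
  | And B C => And (boxt B) (boxt C)
  | Or B C => Or (boxt B) (boxt C)
  | Imp B C => And (Imp (boxt B) (boxt C)) (Box (Imp (boxt B) (boxt C)))
  | Box B => Box (boxt B)
  end.

Inductive TNNIL : form -> Prop :=
| TN_var : forall n, TNNIL (Var n)
| TN_bot : TNNIL Bot
| TN_and : forall A B, TNNIL A -> TNNIL B -> TNNIL (And A B)
| TN_or  : forall A B, TNNIL A -> TNNIL B -> TNNIL (Or A B)
| TN_box : forall A, TNNIL A -> TNNIL (Box A)
| TN_imp : forall A B, TNNIL A -> TNNIL B -> noi A = true -> TNNIL (Imp A B).

Inductive LLe_plus : form -> Prop :=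
| ax_K1 : forall A B, LLe_plus (Imp A (Imp B A))
| ax_S  : forall A B C,
    LLe_plus (Imp (Imp A (Imp B C)) (Imp (Imp A B) (Imp A C)))
| ax_andE1 : forall A B, LLe_plus (Imp (And A B) A)
| ax_andE2 : forall A B, LLe_plus (Imp (And A B) B)
| ax_andI  : forall A B, LLe_plus (Imp A (Imp B (And A B)))
| ax_orI1  : forall A B, LLe_plus (Imp A (Or A B))
| ax_orI2  : forall A B, LLe_plus (Imp B (Or A B))
| ax_orE   : forall A B C,
    LLe_plus (Imp (Imp A C) (Imp (Imp B C) (Imp (Or A B) C)))
| ax_efq   : forall A, LLe_plus (Imp Bot A)
| ax_K   : forall A B, LLe_plus (Imp (Box (Imp A B)) (Imp (Box A) (Box B)))
| ax_4   : forall A, LLe_plus (Imp (Box A) (Box (Box A)))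
| ax_Lob : forall A, LLe_plus (Imp (Box (Imp (Box A) A)) (Box A))
| ax_Le  : forall A, LLe_plus (Imp (Box A) (Box (lei A)))
| ax_CPa : forall p, atomic p -> LLe_plus (Imp p (Box p))
| r_MP  : forall A B, LLe_plus (Imp A B) -> LLe_plus A -> LLe_plus B
| r_Nec : forall A, LLe_plus A -> LLe_plus (Box A).

(* Induction on TNNIL, proving (1)-(3) simultaneously; (4) follows from (1) and (2)
   since [Box A] gives [Box (lei A)] by the Leivant axiom and hence [boxdot (lei A)]
   under the box.  The key facts are that every [boxt A] is self-boxing,
   [boxt A -> Box (boxt A)], and that for [A] in NOI the translations [A] and
   [boxt A] are interchangeable, which is what lets the antecedent of an
   implication be moved across the translations. *)
From Stdlib Require Import List Bool.
Import ListNotations.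

Inductive derives (G : list form) : form -> Prop :=
| der_thm : forall A, LLe_plus A -> derives G A
| der_hyp : forall A, In A G -> derives G A
| der_mp : forall A B, derives G (Imp A B) -> derives G A -> derives G B.

Lemma imp_refl A : LLe_plus (Imp A A).
Proof.
  eapply r_MP; [eapply r_MP|].
  - exact (ax_S A (Imp A A) A).
  - apply ax_K1.
  - exact (ax_K1 A A).
Qed.

Lemma deduction G A B : derives (A :: G) B -> derives G (Imp A B).
Proof.
  intro H. remember (A :: G) as G'. induction H as [C HC|C HC|C D _ IHCD _ IHC]; subst.
  - eapply der_mp; [apply der_thm, ax_K1|]. now apply der_thm.
  - destruct HC as [<-|HC].
    + apply der_thm, imp_refl.
    + eapply der_mp; [apply der_thm, ax_K1|]. now apply der_hyp.
  - eapply der_mp; [eapply der_mp|].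
    + apply der_thm, ax_S.
    + now apply IHCD.
    + now apply IHC.
Qed.

Lemma derives_nil A : derives [] A -> LLe_plus A.
Proof.
  intro H. remember [] as G. induction H; subst.
  - assumption.
  - contradiction.
  - eapply r_MP; eauto.
Qed.

Lemma imp_intro A B : derives [A] B -> LLe_plus (Imp A B).
Proof. intro H. apply derives_nil, deduction, H. Qed.

Lemma der_imp G A B : LLe_plus (Imp A B) -> derives G A -> derives G B.
Proof. intros HAB HA. eapply der_mp; [apply der_thm, HAB | exact HA]. Qed.

Lemma der_hyp0 G A : derives (A :: G) A.
Proof. apply der_hyp; simpl; auto. Qed.

Lemma der_hyp1 G A B : derives (B :: A :: G) A.
Proof. apply der_hyp; simpl; auto. Qed.

Lemma der_andI G A B : derives G A -> derives G B -> derives G (And A B).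
Proof. intros HA HB. eapply der_mp; [eapply der_imp; [apply ax_andI | exact HA] | exact HB]. Qed.

Lemma der_andE1 G A B : derives G (And A B) -> derives G A.
Proof. apply der_imp, ax_andE1. Qed.

Lemma der_andE2 G A B : derives G (And A B) -> derives G B.
Proof. apply der_imp, ax_andE2. Qed.

Lemma der_orI1 G A B : derives G A -> derives G (Or A B).
Proof. apply der_imp, ax_orI1. Qed.

Lemma der_orI2 G A B : derives G B -> derives G (Or A B).
Proof. apply der_imp, ax_orI2. Qed.

Lemma der_orE G A B C :
  derives G (Or A B) -> derives (A :: G) C -> derives (B :: G) C -> derives G C.
Proof.
  intros H HA HB. apply deduction in HA. apply deduction in HB.
  eapply der_mp; [eapply der_mp; [eapply der_mp|] |].
  - apply der_thm, ax_orE.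
  - exact HA.
  - exact HB.
  - exact H.
Qed.

Lemma box_mono A B : LLe_plus (Imp A B) -> LLe_plus (Imp (Box A) (Box B)).
Proof. intro H. eapply r_MP; [apply ax_K | apply r_Nec, H]. Qed.

Lemma der_box_mono G A B : LLe_plus (Imp A B) -> derives G (Box A) -> derives G (Box B).
Proof. intro H. apply der_imp, box_mono, H. Qed.

Lemma der_box4 G A : derives G (Box A) -> derives G (Box (Box A)).
Proof. apply der_imp, ax_4. Qed.

Lemma der_box_andI G A B : derives G (Box A) -> derives G (Box B) -> derives G (Box (And A B)).
Proof.
  intros HA HB. eapply der_mp; [eapply der_imp; [apply ax_K|] | exact HB].
  eapply der_box_mono; [apply (ax_andI A B) | exact HA].
Qed.

Lemma der_boxdot_box G A : derives G (boxdot A) -> derives G (Box (boxdot A)).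
Proof. intro H. apply der_box_andI; [|apply der_box4]; eapply der_andE2, H. Qed.

Lemma iff_intro A B : LLe_plus (Imp A B) -> LLe_plus (Imp B A) -> LLe_plus (Iff A B).
Proof. intros HAB HBA. eapply r_MP; [eapply r_MP; [apply ax_andI|] |]; eassumption. Qed.

Lemma iff_imp_l A B : LLe_plus (Iff A B) -> LLe_plus (Imp A B).
Proof. apply r_MP, ax_andE1. Qed.

Lemma iff_imp_r A B : LLe_plus (Iff A B) -> LLe_plus (Imp B A).
Proof. apply r_MP, ax_andE2. Qed.

Lemma iff_sym A B : LLe_plus (Iff A B) -> LLe_plus (Iff B A).
Proof. intro H. apply iff_intro; [apply iff_imp_r | apply iff_imp_l]; exact H. Qed.

Lemma imp_trans A B C : LLe_plus (Imp A B) -> LLe_plus (Imp B C) -> LLe_plus (Imp A C).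
Proof. intros HAB HBC. apply imp_intro, (der_imp _ _ _ HBC), (der_imp _ _ _ HAB), der_hyp0. Qed.

Lemma iff_trans A B C : LLe_plus (Iff A B) -> LLe_plus (Iff B C) -> LLe_plus (Iff A C).
Proof.
  intros HAB HBC. apply iff_intro.
  - apply (imp_trans _ B); apply iff_imp_l; assumption.
  - apply (imp_trans _ B); apply iff_imp_r; assumption.
Qed.

Lemma and_mono A A' B B' :
  LLe_plus (Imp A A') -> LLe_plus (Imp B B') -> LLe_plus (Imp (And A B) (And A' B')).
Proof.
  intros HA HB. apply imp_intro, der_andI.
  - eapply der_imp, der_andE1, der_hyp0. exact HA.
  - eapply der_imp, der_andE2, der_hyp0. exact HB.
Qed.

Lemma or_mono A A' B B' :
  LLe_plus (Imp A A') -> LLe_plus (Imp B B') -> LLe_plus (Imp (Or A B) (Or A' B')).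
Proof.
  intros HA HB. apply imp_intro. eapply der_orE; [apply der_hyp0 | |].
  - apply der_orI1. eapply der_imp, der_hyp0. exact HA.
  - apply der_orI2. eapply der_imp, der_hyp0. exact HB.
Qed.

Lemma boxdot_intro A B : LLe_plus (Imp (boxdot A) B) -> LLe_plus (Imp (boxdot A) (boxdot B)).
Proof.
  intro H. apply imp_intro, der_andI.
  - eapply der_imp, der_hyp0. exact H.
  - eapply der_box_mono, der_boxdot_box, der_hyp0. exact H.
Qed.

Lemma and_congr A A' B B' :
  LLe_plus (Iff A A') -> LLe_plus (Iff B B') -> LLe_plus (Iff (And A B) (And A' B')).
Proof.
  intros HA HB. apply iff_intro; apply and_mono;
    (apply iff_imp_l + apply iff_imp_r); assumption.
Qed.

Lemma or_congr A A' B B' :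
  LLe_plus (Iff A A') -> LLe_plus (Iff B B') -> LLe_plus (Iff (Or A B) (Or A' B')).
Proof.
  intros HA HB. apply iff_intro; apply or_mono;
    (apply iff_imp_l + apply iff_imp_r); assumption.
Qed.

Lemma box_congr A B : LLe_plus (Iff A B) -> LLe_plus (Iff (Box A) (Box B)).
Proof.
  intro H. apply iff_intro; apply box_mono; [apply iff_imp_l | apply iff_imp_r]; exact H.
Qed.

Lemma boxdot_congr A B : LLe_plus (Iff A B) -> LLe_plus (Iff (boxdot A) (boxdot B)).
Proof. intro H. apply and_congr; [exact H | apply box_congr, H]. Qed.

Lemma boxdot_and A B : LLe_plus (Iff (boxdot (And A B)) (And (boxdot A) (boxdot B))).
Proof.
  apply iff_intro; apply imp_intro.
  - apply der_andI; apply der_andI.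
    + eapply der_andE1, der_andE1, der_hyp0.
    + eapply der_box_mono; [apply ax_andE1 | eapply der_andE2, der_hyp0].
    + eapply der_andE2, der_andE1, der_hyp0.
    + eapply der_box_mono; [apply ax_andE2 | eapply der_andE2, der_hyp0].
  - apply der_andI; [apply der_andI | apply der_box_andI].
    + eapply der_andE1, der_andE1, der_hyp0.
    + eapply der_andE1, der_andE2, der_hyp0.
    + eapply der_andE2, der_andE1, der_hyp0.
    + eapply der_andE2, der_andE2, der_hyp0.
Qed.

Lemma boxdot_boxdot A : LLe_plus (Iff (boxdot (boxdot A)) (boxdot A)).
Proof.
  apply iff_intro; [apply ax_andE1|].
  apply imp_intro, der_andI; [apply der_hyp0 | apply der_boxdot_box, der_hyp0].
Qed.

Lemma boxt_box A : LLe_plus (Imp (boxt A) (Box (boxt A))).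
Proof.
  induction A as [n| |A IHA B IHB|A IHA B IHB|A _ B _|A _]; apply imp_intro; simpl.
  - apply der_boxdot_box, der_hyp0.
  - apply der_boxdot_box, der_hyp0.
  - apply der_box_andI.
    + eapply der_imp, der_andE1, der_hyp0. exact IHA.
    + eapply der_imp, der_andE2, der_hyp0. exact IHB.
  - eapply der_orE; [apply der_hyp0 | |].
    + eapply der_box_mono; [apply ax_orI1 | eapply der_imp, der_hyp0]. exact IHA.
    + eapply der_box_mono; [apply ax_orI2 | eapply der_imp, der_hyp0]. exact IHB.
  - apply der_boxdot_box, der_hyp0.
  - apply der_box4, der_hyp0.
Qed.

Lemma boxt_iff_boxdot A : LLe_plus (Iff (boxt A) (boxdot (boxt A))).
Proof.
  apply iff_intro; [|apply ax_andE1].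
  apply imp_intro, der_andI; [apply der_hyp0 | eapply der_imp, der_hyp0; apply boxt_box].
Qed.

Lemma box_iff_box_boxt A :
  LLe_plus (Iff (boxdot (lei A)) (boxdot (boxt A))) -> LLe_plus (Imp (boxt A) A) ->
  LLe_plus (Iff (Box A) (Box (boxt A))).
Proof.
  intros Hlei Hboxt. apply iff_intro; [|apply box_mono, Hboxt].
  apply imp_intro.
  assert (Hbox_lei : derives [Box A] (Box (lei A))) by (eapply der_imp; [apply ax_Le | apply der_hyp0]).
  eapply der_box_mono; [apply ax_andE1|].
  eapply der_box_mono; [apply (iff_imp_l _ _ Hlei)|].
  apply der_box_andI; [exact Hbox_lei | apply der_box4, Hbox_lei].
Qed.

Definition tnnil_claims (A : form) : Prop :=
  LLe_plus (Iff (boxdot (lei A)) (boxdot (boxt A))) /\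
  LLe_plus (Imp (boxt A) A) /\
  (noi A = true -> LLe_plus (Iff (boxt A) A)).

Lemma tnnil_claims_atomic p : atomic p -> tnnil_claims p.
Proof.
  intro Hp. assert (Hpl : lei p = p) by (destruct p; easy).
  assert (Hpt : boxt p = boxdot p) by (destruct p; easy).
  unfold tnnil_claims. rewrite Hpl, Hpt. split; [|split].
  - apply iff_sym, boxdot_boxdot.
  - apply ax_andE1.
  - intros _. apply iff_intro; [apply ax_andE1|].
    apply imp_intro, der_andI; [apply der_hyp0 | eapply der_imp; [apply ax_CPa, Hp | apply der_hyp0]].
Qed.

Lemma tnnil_claims_and A B :
  tnnil_claims A -> tnnil_claims B -> tnnil_claims (And A B).
Proof.
  intros (A1 & A2 & A3) (B1 & B2 & B3). split; [|split]; simpl.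
  - apply (iff_trans _ (And (boxdot (lei A)) (boxdot (lei B)))); [apply boxdot_and|].
    apply (iff_trans _ (And (boxdot (boxt A)) (boxdot (boxt B)))); [apply and_congr; assumption|].
    apply iff_sym, boxdot_and.
  - apply and_mono; assumption.
  - intro Hnoi. apply andb_prop in Hnoi as [HA HB]. apply and_congr; auto.
Qed.

Lemma tnnil_claims_or A B :
  tnnil_claims A -> tnnil_claims B -> tnnil_claims (Or A B).
Proof.
  intros (A1 & A2 & A3) (B1 & B2 & B3). split; [|split]; simpl.
  - apply boxdot_congr, or_congr.
    + apply (iff_trans _ _ _ A1), iff_sym, boxt_iff_boxdot.
    + apply (iff_trans _ _ _ B1), iff_sym, boxt_iff_boxdot.
  - apply or_mono; assumption.
  - intro Hnoi. apply andb_prop in Hnoi as [HA HB]. apply or_congr; auto.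
Qed.

Lemma tnnil_claims_box A : tnnil_claims A -> tnnil_claims (Box A).
Proof.
  intros (A1 & A2 & _). pose proof (box_iff_box_boxt A A1 A2) as A4.
  split; [|split]; simpl.
  - apply boxdot_congr, A4.
  - apply box_mono, A2.
  - intros _. apply iff_sym, A4.
Qed.

Lemma tnnil_claims_imp A B :
  noi A = true -> tnnil_claims A -> tnnil_claims B -> tnnil_claims (Imp A B).
Proof.
  intros HA (A1 & A2 & A3) (B1 & B2 & _). specialize (A3 HA).
  unfold tnnil_claims. simpl lei. rewrite HA.
  change (boxt (Imp A B)) with (boxdot (Imp (boxt A) (boxt B))).
  split; [|split].
  - assert (Hto : LLe_plus (Imp (boxdot (Imp (boxt A) (boxt B))) (Imp A (lei B)))).
    { apply imp_intro, deduction.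
      eapply der_andE1, der_imp; [apply (iff_imp_r _ _ B1)|].
      eapply der_imp; [apply (iff_imp_l _ _ (boxt_iff_boxdot B))|].
      eapply der_mp; [eapply der_andE1, der_hyp1|].
      eapply der_imp; [apply (iff_imp_r _ _ A3) | apply der_hyp0]. }
    assert (Hfrom : LLe_plus (Imp (boxdot (Imp A (lei B))) (Imp (boxt A) (boxt B)))).
    { apply imp_intro, deduction.
      assert (HbA : derives [boxt A; boxdot (Imp A (lei B))] (Box A)).
      { eapply der_box_mono; [apply A2 | eapply der_imp; [apply boxt_box | apply der_hyp0]]. }
      eapply der_andE1, der_imp; [apply (iff_imp_l _ _ B1)|]. apply der_andI.
      - eapply der_mp; [eapply der_andE1, der_hyp1 | eapply der_imp; [apply A2 | apply der_hyp0]].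
      - eapply der_mp; [eapply der_imp; [apply ax_K | eapply der_andE2, der_hyp1] | exact HbA]. }
    apply (iff_trans _ (boxdot (Imp (boxt A) (boxt B)))); [|apply iff_sym, boxdot_boxdot].
    apply iff_intro; apply boxdot_intro; assumption.
  - apply imp_intro, deduction. eapply der_imp; [apply B2|].
    eapply der_mp; [eapply der_andE1, der_hyp1|].
    eapply der_imp; [apply (iff_imp_r _ _ A3) | apply der_hyp0].
  - discriminate.
Qed.

Lemma tnnil_claims_TNNIL A : TNNIL A -> tnnil_claims A.
Proof.
  induction 1.
  - now apply tnnil_claims_atomic.
  - now apply tnnil_claims_atomic.
  - now apply tnnil_claims_and.
  - now apply tnnil_claims_or.
  - now apply tnnil_claims_box.
  - now apply tnnil_claims_imp.
Qed.

Theorem lemma4p21 : forall A : form, TNNIL A ->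
  LLe_plus (Iff (boxdot (lei A)) (boxdot (boxt A))) /\
  LLe_plus (Imp (boxt A) A) /\
  (noi A = true -> LLe_plus (Iff (boxt A) A)) /\
  LLe_plus (Iff (Box A) (Box (boxt A))).
Proof.
  intros A HA. destruct (tnnil_claims_TNNIL A HA) as (H1 & H2 & H3).
  repeat split; auto.
  apply box_iff_box_boxt; assumption.
Qed.
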